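(* Let $p>0$, $q>0$, $\theta\ge 0$, and for $i=1,2$ let $R_i^{\max}>0$ and let $w_i,v_i,\psi_i$ be nonnegative functions, continuous on $[0,R_i^{\max})$ and $C^1$ on $(0,R_i^{\max})$, such that $$w_1'+\tfrac{\theta}{r}w_1\ge v_1^p,\quad v_1'\ge \psi_1,\quad \psi_1'+\tfrac{\theta}{r}\psi_1\ge w_1^q\quad\text{on }(0,R_1^{\max}),$$ $$w_2'+\tfrac{\theta}{r}w_2\le v_2^p,\quad v_2'\le \psi_2,\quad \psi_2'+\tfrac{\theta}{r}\psi_2\le w_2^q\quad\text{on }(0,R_2^{\max}),$$ with $w_i(0)=\mu_i\ge0$, $v_i(0)=m_i\ge0$, $\psi_i(0)=\nu_i\ge0$. If $\mu_1\ge\mu_2$, $m_1\ge m_2$, $\nu_1\ge\nu_2$ and $(\mu_1,m_1,\nu_1)\ne(\mu_2,m_2,\nu_2)$, then $$w_1(r)>w_2(r),\quad v_1(r)>v_2(r),\quad \psi_1(r)>\psi_2(r)\qquad\text{for all }0<r<\min\{R_1^{\max},R_2^{\max}\}.$$ *)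

From Stdlib Require Import Reals.
Open Scope R_scope.

(* Real power x^p for x >= 0 and p > 0, with the convention 0^p = 0
   (Stdlib's Rpower 0 p = exp (p * ln 0) = 1, which is wrong at 0). *)
Definition rpow (x p : R) : R := if Rle_dec x 0 then 0 else Rpower x p.

Definition cont_on_Ico (f : R -> R) (Rm : R) : Prop :=
  forall x, 0 <= x < Rm ->
    forall eps, 0 < eps -> exists delta, 0 < delta /\
      forall y, 0 <= y < Rm -> Rabs (y - x) < delta -> Rabs (f y - f x) < eps.

Definition C1_on_Ioo (f df : R -> R) (Rm : R) : Prop :=
  (forall x, 0 < x < Rm -> derivable_pt_lim f x (df x)) /\
  (forall x, 0 < x < Rm -> continuity_pt df x).

Definition admissible (f df : R -> R) (Rm : R) : Prop :=
  (forall x, 0 <= x < Rm -> 0 <= f x) /\ cont_on_Ico f Rm /\ C1_on_Ioo f df Rm.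

(* Subtracting the two systems, the differences W = w1 - w2,
   V = v1 - v2 and Psi = psi1 - psi2 form a cyclic monotone system: positivity
   of V pushes up W, positivity of Psi pushes up V, and positivity of W pushes
   up Psi, where "pushes up with weight k" means D' + (k/r) D > 0, i.e. r^k D
   is strictly increasing.  Such a D cannot become nonpositive once it starts
   nonnegative, so the one strictly positive initial difference propagates
   around the cycle and makes all three positive right after 0.  Real induction
   on r carries positivity along the whole interval: at a supremum point the
   monotonicity of r^k D keeps every difference positive, and from there the
   cycle starts again. *)

From Stdlib Require Import Reals Lra Classical.
Open Scope R_scope.

Lemma Rpower_pos (x k : R) : 0 < Rpower x k.
Proof. exact (exp_pos _). Qed.

Lemma Rlt_rpow_l (x y p : R) : 0 < p -> 0 <= x -> x < y -> rpow x p < rpow y p.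
Proof.
  intros Hp Hx Hxy; unfold rpow.
  destruct (Rle_dec y 0); [lra|].
  destruct (Rle_dec x 0).
  - apply Rpower_pos.
  - apply Rlt_Rpower_l; lra.
Qed.

Lemma cont_on_Ico_minus (f g : R -> R) (b1 b2 : R) :
  cont_on_Ico f b1 -> cont_on_Ico g b2 ->
  cont_on_Ico (fun x => f x - g x) (Rmin b1 b2).
Proof.
  intros Hf Hg x Hx eps Heps.
  pose proof (Rmin_l b1 b2); pose proof (Rmin_r b1 b2).
  destruct (Hf x ltac:(lra) (eps / 2) ltac:(lra)) as [d1 [Hd1 P1]].
  destruct (Hg x ltac:(lra) (eps / 2) ltac:(lra)) as [d2 [Hd2 P2]].
  exists (Rmin d1 d2); split; [apply Rmin_pos; lra|].
  intros y Hy Hyx.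
  pose proof (Rmin_l d1 d2); pose proof (Rmin_r d1 d2).
  pose proof (P1 y ltac:(lra) ltac:(lra)) as Q1.
  pose proof (P2 y ltac:(lra) ltac:(lra)) as Q2.
  apply Rabs_def2 in Q1; apply Rabs_def2 in Q2; apply Rabs_def1; lra.
Qed.

Lemma cont_on_Ico_right_lower (f : R -> R) (b a : R) :
  cont_on_Ico f b -> 0 <= a < b ->
  forall eps, 0 < eps ->
    exists d, 0 < d /\ a + d <= b /\ forall t, a < t < a + d -> f a - eps < f t.
Proof.
  intros Hf Ha eps Heps.
  destruct (Hf a Ha eps Heps) as [d [Hd P]].
  exists (Rmin d (b - a)); split; [apply Rmin_pos; lra|].
  pose proof (Rmin_l d (b - a)); pose proof (Rmin_r d (b - a)).
  split; [lra|].
  intros t Ht.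
  assert (Q : Rabs (f t - f a) < eps) by (apply P; [lra | rewrite Rabs_pos_eq; lra]).
  apply Rabs_def2 in Q; lra.
Qed.

Lemma derivable_pt_lim_Rpower_mult (k x d : R) (D : R -> R) :
  0 < x -> derivable_pt_lim D x d ->
  derivable_pt_lim (fun t => Rpower t k * D t) x (Rpower x k * (d + k / x * D x)).
Proof.
  intros Hx HD.
  pose proof (derivable_pt_lim_mult _ _ x _ _ (derivable_pt_lim_power x k Hx) HD) as H.
  assert (E : Rpower x (k - 1) * x = Rpower x k).
  { rewrite <- (Rpower_1 x) at 2 by exact Hx.
    rewrite <- Rpower_plus; f_equal; ring. }
  replace (Rpower x k * (d + k / x * D x))
    with (k * Rpower x (k - 1) * D x + Rpower x k * d); [exact H|].
  rewrite <- E; field; lra.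
Qed.

Lemma Rpower_mult_increasing (k u v : R) (D dD : R -> R) :
  0 < u < v ->
  (forall x, u <= x <= v -> derivable_pt_lim D x (dD x)) ->
  (forall x, u < x < v -> dD x + k / x * D x > 0) ->
  Rpower u k * D u < Rpower v k * D v.
Proof.
  intros Huv HD Hpush.
  destruct (MVT_cor2 (fun t => Rpower t k * D t)
              (fun t => Rpower t k * (dD t + k / t * D t)) u v ltac:(lra))
    as [c [Hc Hcuv]].
  { intros c Hc; apply derivable_pt_lim_Rpower_mult; [lra | apply HD; exact Hc]. }
  pose proof (Hpush c Hcuv); pose proof (Rpower_pos c k).
  assert (0 < Rpower c k * (dD c + k / c * D c) * (v - u))
    by (apply Rmult_lt_0_compat; [apply Rmult_lt_0_compat|]; lra).
  lra.
Qed.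

Lemma Rpower_mult_increasing_pos (k u v : R) (D dD : R -> R) :
  0 < u < v ->
  (forall x, u <= x <= v -> derivable_pt_lim D x (dD x)) ->
  (forall x, u < x < v -> dD x + k / x * D x > 0) ->
  0 < D u -> 0 < D v.
Proof.
  intros Huv HD Hpush Hu.
  pose proof (Rpower_mult_increasing k u v D dD Huv HD Hpush) as Hinc.
  pose proof (Rpower_pos u k); pose proof (Rpower_pos v k).
  assert (0 < Rpower u k * D u) by (apply Rmult_lt_0_compat; lra).
  destruct (Rlt_or_le 0 (D v)) as [|Hv]; [assumption|].
  assert (Rpower v k * D v <= 0) by (rewrite <- (Rmult_0_r (Rpower v k));
    apply Rmult_le_compat_l; lra).
  lra.
Qed.

(* If D dropped to D m < 0, then t^k D t < m^k D m and t^k <= m^k would keep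
   D below D m on all of (a, m), against D a >= 0 and right continuity. *)
Lemma weighted_positive_from (k a c : R) (D dD : R -> R) :
  0 <= k -> 0 <= a ->
  (forall x, a < x < c -> derivable_pt_lim D x (dD x)) ->
  (forall x, a < x < c -> dD x + k / x * D x > 0) ->
  0 <= D a ->
  (forall eps, 0 < eps -> exists d, 0 < d /\ forall t, a < t < a + d -> D a - eps < D t) ->
  forall r, a < r < c -> 0 < D r.
Proof.
  intros Hk Ha HD Hpush HDa Hlow r Hr.
  apply Rnot_le_lt; intro Hr0.
  set (m := (a + r) / 2).
  assert (Hinc : forall u v, a < u < v -> v <= r -> Rpower u k * D u < Rpower v k * D v).
  { intros u v Huv Hv; apply (Rpower_mult_increasing k u v D dD); intros;
      [lra | apply HD | apply Hpush]; lra. }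
  assert (HDm : D m < 0).
  { pose proof (Hinc m r ltac:(unfold m; lra) ltac:(lra)).
    pose proof (Rpower_pos m k); pose proof (Rpower_pos r k).
    assert (Rpower r k * D r <= 0) by (rewrite <- (Rmult_0_r (Rpower r k));
      apply Rmult_le_compat_l; lra).
    nra. }
  assert (Hbelow : forall t, a < t < m -> D t < D m).
  { intros t Ht.
    pose proof (Hinc t m ltac:(lra) ltac:(unfold m; lra)).
    pose proof (Rle_Rpower_l t m k Hk ltac:(lra)); pose proof (Rpower_pos t k).
    nra. }
  destruct (Hlow (D a - D m) ltac:(lra)) as [d [Hd Ht]].
  set (t := a + Rmin d (m - a) / 2).
  assert (0 < Rmin d (m - a)) by (apply Rmin_pos; unfold m; lra).
  pose proof (Rmin_l d (m - a)); pose proof (Rmin_r d (m - a)).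
  pose proof (Ht t ltac:(unfold t; lra)).
  pose proof (Hbelow t ltac:(unfold t; lra)).
  lra.
Qed.

Lemma real_induction (b : R) (P : R -> Prop) :
  (forall s, 0 < s < b -> (forall t, 0 < t < s -> P t) -> P s) ->
  (forall s, 0 <= s < b -> (forall t, 0 < t <= s -> P t) ->
     exists d, 0 < d /\ forall t, s < t < s + d -> P t) ->
  forall r, 0 < r < b -> P r.
Proof.
  intros Hclosed Hopen r Hr.
  set (E := fun x => 0 <= x <= r /\ forall t, 0 < t < x -> P t).
  assert (E0 : E 0) by (split; [lra | intros; lra]).
  assert (HE : bound E) by (exists r; intros x [Hx _]; lra).
  destruct (completeness E HE (ex_intro _ 0 E0)) as [s [Hub Hlub]].
  pose proof (Hub 0 E0).
  assert (Hsr : s <= r) by (apply Hlub; intros x [Hx _]; lra).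
  assert (Hbelow : forall t, 0 < t < s -> P t).
  { intros t Ht.
    destruct (classic (exists x, E x /\ t < x)) as [[x [[_ Hx] Htx]] | Hno].
    - apply Hx; lra.
    - exfalso.
      assert (Hu : is_upper_bound E t).
      { intros x Ex; apply Rnot_lt_le; intro; apply Hno; exists x; auto. }
      pose proof (Hlub t Hu); lra. }
  assert (Hupto : forall t, 0 < t <= s -> P t).
  { intros t Ht; destruct (Req_dec t s) as [->|];
      [apply Hclosed; [lra | exact Hbelow] | apply Hbelow; lra]. }
  destruct (Hopen s ltac:(lra) Hupto) as [d [Hd Hafter]].
  destruct (Rlt_or_le r (s + d)) as [Hrd|Hrd].
  - destruct (Rle_or_lt r s); [apply Hupto | apply Hafter]; lra.
  - assert (E (s + d)).
    { split; [lra|]. intros t Ht.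
      destruct (Rle_or_lt t s); [apply Hupto | apply Hafter]; lra. }
    pose proof (Hub (s + d) ltac:(assumption)); lra.
Qed.

Section CyclicSystem.

Variables (b k1 k2 k3 : R) (f1 f2 f3 df1 df2 df3 : R -> R).
Hypotheses (hk1 : 0 <= k1) (hk2 : 0 <= k2) (hk3 : 0 <= k3).
Hypotheses (hc1 : cont_on_Ico f1 b) (hc2 : cont_on_Ico f2 b) (hc3 : cont_on_Ico f3 b).
Hypotheses (hd1 : forall x, 0 < x < b -> derivable_pt_lim f1 x (df1 x))
  (hd2 : forall x, 0 < x < b -> derivable_pt_lim f2 x (df2 x))
  (hd3 : forall x, 0 < x < b -> derivable_pt_lim f3 x (df3 x)).
Hypotheses (hpush1 : forall x, 0 < x < b -> 0 < f2 x -> df1 x + k1 / x * f1 x > 0)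
  (hpush2 : forall x, 0 < x < b -> 0 < f3 x -> df2 x + k2 / x * f2 x > 0)
  (hpush3 : forall x, 0 < x < b -> 0 < f1 x -> df3 x + k3 / x * f3 x > 0).

Let all_pos (t : R) : Prop := 0 < f1 t /\ 0 < f2 t /\ 0 < f3 t.

Lemma pushed_positive_from (k : R) (D dD G : R -> R) (a c : R) :
  0 <= k -> 0 <= a < c -> c <= b -> cont_on_Ico D b ->
  (forall x, 0 < x < b -> derivable_pt_lim D x (dD x)) ->
  (forall x, 0 < x < b -> 0 < G x -> dD x + k / x * D x > 0) ->
  0 <= D a -> (forall t, a < t < c -> 0 < G t) ->
  forall t, a < t < c -> 0 < D t.
Proof.
  intros Hk Hac Hcb Hc HD Hpush HDa HG.
  apply (weighted_positive_from k a c D dD Hk ltac:(lra));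
    [intros; apply HD; lra | | exact HDa |].
  - intros x Hx; apply Hpush; [lra | apply HG; exact Hx].
  - intros eps Heps.
    destruct (cont_on_Ico_right_lower D b a Hc ltac:(lra) eps Heps) as [d [Hd [_ H]]].
    exists d; auto.
Qed.

Lemma all_pos_right (a : R) :
  0 <= a < b -> 0 <= f1 a -> 0 <= f2 a -> 0 <= f3 a ->
  0 < f1 a \/ 0 < f2 a \/ 0 < f3 a ->
  exists d, 0 < d /\ forall t, a < t < a + d -> all_pos t.
Proof.
  intros Ha H1 H2 H3 Hstrict.
  assert (Hstart : forall f, cont_on_Ico f b -> 0 < f a ->
            exists d, 0 < d /\ a + d <= b /\ forall t, a < t < a + d -> 0 < f t).
  { intros f Hf Hfa.
    destruct (cont_on_Ico_right_lower f b a Hf Ha (f a) Hfa) as [d [Hd [Hdb H]]].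
    exists d; repeat split; try lra; intros t Ht; pose proof (H t Ht); lra. }
  destruct Hstrict as [Hs | [Hs | Hs]].
  - destruct (Hstart f1 hc1 Hs) as [d [Hd [Hdb P1]]]; exists d; split; [exact Hd|].
    pose proof (pushed_positive_from _ _ _ _ a (a + d) hk3 ltac:(lra) Hdb hc3 hd3 hpush3 H3 P1) as P3.
    pose proof (pushed_positive_from _ _ _ _ a (a + d) hk2 ltac:(lra) Hdb hc2 hd2 hpush2 H2 P3) as P2.
    intros t Ht; repeat split; auto.
  - destruct (Hstart f2 hc2 Hs) as [d [Hd [Hdb P2]]]; exists d; split; [exact Hd|].
    pose proof (pushed_positive_from _ _ _ _ a (a + d) hk1 ltac:(lra) Hdb hc1 hd1 hpush1 H1 P2) as P1.
    pose proof (pushed_positive_from _ _ _ _ a (a + d) hk3 ltac:(lra) Hdb hc3 hd3 hpush3 H3 P1) as P3.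
    intros t Ht; repeat split; auto.
  - destruct (Hstart f3 hc3 Hs) as [d [Hd [Hdb P3]]]; exists d; split; [exact Hd|].
    pose proof (pushed_positive_from _ _ _ _ a (a + d) hk2 ltac:(lra) Hdb hc2 hd2 hpush2 H2 P3) as P2.
    pose proof (pushed_positive_from _ _ _ _ a (a + d) hk1 ltac:(lra) Hdb hc1 hd1 hpush1 H1 P2) as P1.
    intros t Ht; repeat split; auto.
Qed.

Lemma all_pos_closed (s : R) :
  0 < s < b -> (forall t, 0 < t < s -> all_pos t) -> all_pos s.
Proof.
  intros Hs Hbelow.
  destruct (Hbelow (s / 2) ltac:(lra)) as [H1 [H2 H3]].
  assert (Hder : forall (f df : R -> R), (forall x, 0 < x < b -> derivable_pt_lim f x (df x)) ->
                   forall x, s / 2 <= x <= s -> derivable_pt_lim f x (df x))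
    by (intros f df Hf x Hx; apply Hf; lra).
  repeat split.
  - apply (Rpower_mult_increasing_pos k1 (s / 2) s f1 df1); [lra | auto | | exact H1].
    intros x Hx; apply hpush1; [lra | apply Hbelow; lra].
  - apply (Rpower_mult_increasing_pos k2 (s / 2) s f2 df2); [lra | auto | | exact H2].
    intros x Hx; apply hpush2; [lra | apply Hbelow; lra].
  - apply (Rpower_mult_increasing_pos k3 (s / 2) s f3 df3); [lra | auto | | exact H3].
    intros x Hx; apply hpush3; [lra | apply Hbelow; lra].
Qed.

Theorem cyclic_system_positive :
  0 <= f1 0 -> 0 <= f2 0 -> 0 <= f3 0 -> 0 < f1 0 \/ 0 < f2 0 \/ 0 < f3 0 ->
  forall r, 0 < r < b -> 0 < f1 r /\ 0 < f2 r /\ 0 < f3 r.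
Proof.
  intros H1 H2 H3 Hstrict.
  apply real_induction; [exact all_pos_closed|].
  intros s Hs Hupto.
  destruct (Req_dec s 0) as [->|Hs0]; [apply all_pos_right; auto; lra|].
  destruct (Hupto s ltac:(lra)) as [P1 [P2 P3]].
  apply all_pos_right; auto; lra.
Qed.

End CyclicSystem.

Theorem lemma6p1 (p q theta : R) (R1 R2 : R)
  (w1 v1 psi1 dw1 dv1 dpsi1 w2 v2 psi2 dw2 dv2 dpsi2 : R -> R)
  (mu1 m1 nu1 mu2 m2 nu2 : R)
  (hp : 0 < p) (hq : 0 < q) (htheta : 0 <= theta)
  (hR1 : 0 < R1) (hR2 : 0 < R2)
  (hw1 : admissible w1 dw1 R1) (hv1 : admissible v1 dv1 R1)
  (hpsi1 : admissible psi1 dpsi1 R1)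
  (hw2 : admissible w2 dw2 R2) (hv2 : admissible v2 dv2 R2)
  (hpsi2 : admissible psi2 dpsi2 R2)
  (h1a : forall r, 0 < r < R1 -> dw1 r + theta / r * w1 r >= rpow (v1 r) p)
  (h1b : forall r, 0 < r < R1 -> dv1 r >= psi1 r)
  (h1c : forall r, 0 < r < R1 -> dpsi1 r + theta / r * psi1 r >= rpow (w1 r) q)
  (h2a : forall r, 0 < r < R2 -> dw2 r + theta / r * w2 r <= rpow (v2 r) p)
  (h2b : forall r, 0 < r < R2 -> dv2 r <= psi2 r)
  (h2c : forall r, 0 < r < R2 -> dpsi2 r + theta / r * psi2 r <= rpow (w2 r) q)
  (i1w : w1 0 = mu1) (i1v : v1 0 = m1) (i1p : psi1 0 = nu1)
  (i2w : w2 0 = mu2) (i2v : v2 0 = m2) (i2p : psi2 0 = nu2)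
  (hmu1 : 0 <= mu1) (hm1 : 0 <= m1) (hnu1 : 0 <= nu1)
  (hmu2 : 0 <= mu2) (hm2 : 0 <= m2) (hnu2 : 0 <= nu2)
  (hmu : mu1 >= mu2) (hm : m1 >= m2) (hnu : nu1 >= nu2)
  (hne : (mu1, m1, nu1) <> (mu2, m2, nu2)) :
  forall r, 0 < r < Rmin R1 R2 ->
    w1 r > w2 r /\ v1 r > v2 r /\ psi1 r > psi2 r.
Proof.
  subst mu1 m1 nu1 mu2 m2 nu2.
  destruct hw1 as [_ [cw1 [dw1' _]]], hv1 as [_ [cv1 [dv1' _]]], hpsi1 as [_ [cp1 [dp1' _]]].
  destruct hw2 as [nw2 [cw2 [dw2' _]]], hv2 as [nv2 [cv2 [dv2' _]]],
    hpsi2 as [_ [cp2 [dp2' _]]].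
  pose proof (Rmin_l R1 R2); pose proof (Rmin_r R1 R2).
  assert (Hderiv : forall f1 f2 df1 df2 : R -> R,
             (forall x, 0 < x < R1 -> derivable_pt_lim f1 x (df1 x)) ->
             (forall x, 0 < x < R2 -> derivable_pt_lim f2 x (df2 x)) ->
             forall x, 0 < x < Rmin R1 R2 ->
               derivable_pt_lim (fun t => f1 t - f2 t) x (df1 x - df2 x))
    by (intros f1 f2 df1 df2 H1 H2 x Hx; apply derivable_pt_lim_minus; [apply H1 | apply H2]; lra).
  assert (pushW : forall x, 0 < x < Rmin R1 R2 -> 0 < v1 x - v2 x ->
            (dw1 x - dw2 x) + theta / x * (w1 x - w2 x) > 0).
  { intros x Hx HV.
    pose proof (h1a x ltac:(lra)); pose proof (h2a x ltac:(lra)).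
    pose proof (Rlt_rpow_l (v2 x) (v1 x) p hp ltac:(apply nv2; lra) ltac:(lra)).
    replace (theta / x * (w1 x - w2 x)) with (theta / x * w1 x - theta / x * w2 x) by ring.
    lra. }
  assert (pushV : forall x, 0 < x < Rmin R1 R2 -> 0 < psi1 x - psi2 x ->
            (dv1 x - dv2 x) + 0 / x * (v1 x - v2 x) > 0).
  { intros x Hx HPsi.
    pose proof (h1b x ltac:(lra)); pose proof (h2b x ltac:(lra)).
    rewrite Rdiv_0_l; lra. }
  assert (pushPsi : forall x, 0 < x < Rmin R1 R2 -> 0 < w1 x - w2 x ->
            (dpsi1 x - dpsi2 x) + theta / x * (psi1 x - psi2 x) > 0).
  { intros x Hx HW.
    pose proof (h1c x ltac:(lra)); pose proof (h2c x ltac:(lra)).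
    pose proof (Rlt_rpow_l (w2 x) (w1 x) q hq ltac:(apply nw2; lra) ltac:(lra)).
    replace (theta / x * (psi1 x - psi2 x))
      with (theta / x * psi1 x - theta / x * psi2 x) by ring.
    lra. }
  assert (Hstrict : 0 < w1 0 - w2 0 \/ 0 < v1 0 - v2 0 \/ 0 < psi1 0 - psi2 0).
  { destruct (Rlt_or_le (w2 0) (w1 0)); [lra|].
    destruct (Rlt_or_le (v2 0) (v1 0)); [lra|].
    destruct (Rlt_or_le (psi2 0) (psi1 0)); [lra|].
    exfalso; apply hne; repeat f_equal; lra. }
  intros r Hr.
  enough (0 < w1 r - w2 r /\ 0 < v1 r - v2 r /\ 0 < psi1 r - psi2 r) by lra.
  apply (cyclic_system_positive (Rmin R1 R2) theta 0 theta _ _ _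
           (fun t => dw1 t - dw2 t) (fun t => dv1 t - dv2 t) (fun t => dpsi1 t - dpsi2 t)
           htheta (Rle_refl 0) htheta
           (cont_on_Ico_minus _ _ _ _ cw1 cw2) (cont_on_Ico_minus _ _ _ _ cv1 cv2)
           (cont_on_Ico_minus _ _ _ _ cp1 cp2)
           (Hderiv _ _ _ _ dw1' dw2') (Hderiv _ _ _ _ dv1' dv2') (Hderiv _ _ _ _ dp1' dp2')
           pushW pushV pushPsi); lra.
Qed.
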